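(* Let $n\ge 1$, $k>0$ and $\nu>0$. On the Siegel--Jacobi upper half space $\mathcal{X}^J_n=\{(v,u): v\in M(n,\mathbb{C}),\ v=v^t,\ \Im v>0,\ u\in M(1,n,\mathbb{C})\}$ let $\omega_{\mathcal{X}^J_n}$ be the two-form (the image under the partial Cayley transform of the invariant Kähler two-form of the Siegel--Jacobi ball $\mathcal{D}^J_n$) given by $$-\mathrm{i}\,\omega_{\mathcal{X}^J_n}(v,u)=\frac{k}{2}\operatorname{tr}(H\wedge\bar H)+\frac{2\nu}{\mathrm{i}}\operatorname{tr}(G^tD\wedge\bar G),\qquad D:=(\bar v-v)^{-1},\quad H:=D\,\mathrm{d}v,\quad G^t:=\mathrm{d}u-p\,\mathrm{d}v,$$ where $p:=(u-\bar u)(v-\bar v)^{-1}\in M(1,n,\mathbb{R})$. Introduce real coordinates $(x,y,p,q)$ by $v=x+\mathrm{i}y$ with $x,y$ real symmetric $n\times n$ matrices, $y$ positive definite, and $u=pv+q$ with $p,q\in M(1,n,\mathbb{R})$ (so that $G^t=\mathrm{d}p\,(x+\mathrm{i}y)+\mathrm{d}q$). Then $$\omega_{\mathcal{X}^J_n}(x,y,p,q)=\omega_1+\omega_2,$$ where $$\omega_1=\frac{k}{4}\operatorname{tr}\big(y^{-1}\mathrm{d}x\wedge y^{-1}\mathrm{d}y\big)=-\frac{k}{4}\operatorname{tr}\big(\mathrm{d}x\wedge \mathrm{d}(y^{-1})\big),\qquad \omega_2=2\nu\,\mathrm{d}q^t\wedge\mathrm{d}p=\sum_{i=1}^n \mathrm{d}(2\nu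 q_i)\wedge \mathrm{d}p_i .$$ Moreover, $\omega_1$ is in Darboux form $$\omega_1=\sum_{a=1}^n \mathrm{d}\Big(\tfrac{k}{4}x_{aa}\Big)\wedge \mathrm{d}\big(-(y^{-1})_{aa}\big)+\sum_{1\le a<b\le n}\mathrm{d}\Big(\tfrac{k}{2}x_{ab}\Big)\wedge \mathrm{d}\big(-(y^{-1})_{ab}\big),$$ so that $\omega_{\mathcal{X}^J_n}=\sum_{I=1}^{n(n+3)/2}\mathrm{d}Q^I\wedge\mathrm{d}P^I$ with the $n(n+1)/2$ pairs $(Q^I,P^I)$ equal to $(\tfrac{k}{4}x_{aa},-(y^{-1})_{aa})$, $(\tfrac{k}{2}x_{ab},-(y^{-1})_{ab})$ ($a<b$), together with the $n$ pairs $(2\nu q_i,p_i)$.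
   Context: Matrix-valued differential forms are multiplied using matrix multiplication combined with the wedge product of their entries; $\operatorname{tr}$ is the trace; $\bar{\ }$ denotes complex conjugation and $G=(G^t)^t$ is the column of one-forms corresponding to the row $G^t$. The parameters $k$ (with $2k\in\mathbb{N}$) and $\nu>0$ index, respectively, the holomorphic discrete series of $\mathrm{Sp}(n,\mathbb{R})$ and the representations of the Heisenberg group; here they are just positive constants. *)

From HB Require Import structures.
From mathcomp Require Import all_boot all_order all_algebra.
From mathcomp Require Import complex.
From mathcomp Require Import all_classical all_reals all_analysis.
Set Implicit Arguments. Unset Strict Implicit. Unset Printing Implicit Defensive.
Import Order.TTheory GRing.Theory Num.Theory.
Local Open Scope ring_scope.
Local Open Scope complex_scope.

Section SiegelJacobi.
Variables (R : realType) (n : nat).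
Local Notation C := (R[i]).

(* A point (x, y, p, q) of the real coordinate chart of X^J_n, and also a
   tangent vector (dx, dy, dp, dq) at such a point. *)
Record pt := Pt { px : 'M[R]_n; py : 'M[R]_n; pp : 'rV[R]_n; pq : 'rV[R]_n }.

Definition padd (P Q : pt) : pt :=
  Pt (px P + px Q) (py P + py Q) (pp P + pp Q) (pq P + pq Q).
Definition pscale (t : R) (P : pt) : pt :=
  Pt (t *: px P) (t *: py P) (t *: pp P) (t *: pq P).

Definition sym_mx (a : 'M[R]_n) := a^T = a.
Definition posdef_mx (a : 'M[R]_n) :=
  sym_mx a /\ forall z : 'rV[R]_n, z != 0 -> 0 < (z *m a *m z^T) 0 0.
Definition in_domain (P : pt) := sym_mx (px P) /\ posdef_mx (py P).
Definition tangent (X : pt) := sym_mx (px X) /\ sym_mx (py X).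

(* Exterior derivative of a real function f of the point, evaluated on
   the tangent vector X at the point P (directional derivative). *)
Definition dR (f : pt -> R) (P X : pt) : R :=
  derive1 (fun t : R => f (padd P (pscale t X))) 0.
Definition dM a b (F : pt -> 'M[R]_(a, b)) (P X : pt) : 'M[R]_(a, b) :=
  \matrix_(i, j) dR (fun Q => F Q i j) P X.
Definition dC a b (F : pt -> 'M[C]_(a, b)) (P X : pt) : 'M[C]_(a, b) :=
  \matrix_(i, j) ((dR (fun Q => complex.Re (F Q i j)) P X)%:C
                  + 'i * (dR (fun Q => complex.Im (F Q i j)) P X)%:C).

(* Wedge product of matrix valued one-forms (matrix multiplication combined
   with the wedge product of entries, alpha^beta(X,Y)=a(X)b(Y)-a(Y)b(X)). *)
Definition mwedge (K : pzRingType) a b c (A : pt -> 'M[K]_(a, b))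
  (B : pt -> 'M[K]_(b, c)) (X Y : pt) : 'M[K]_(a, c) :=
  A X *m B Y - A Y *m B X.
Definition swedge (A B : pt -> R) (X Y : pt) : R := A X * B Y - A Y * B X.

Definition cmx a b (m : 'M[R]_(a, b)) : 'M[C]_(a, b) := map_mx (fun r => r%:C) m.
Definition conjmx a b (m : 'M[C]_(a, b)) : 'M[C]_(a, b) := map_mx conjc m.

Definition vC (P : pt) : 'M[C]_n := cmx (px P) + 'i *: cmx (py P).
Definition uC (P : pt) : 'rV[C]_n := cmx (pp P) *m vC P + cmx (pq P).

Section Omega.
Variables (k nu : R) (P : pt).
Definition Dmx : 'M[C]_n := invmx (conjmx (vC P) - vC P).
Definition Hform (X : pt) : 'M[C]_n := Dmx *m dC vC P X.
Definition Hbar (X : pt) : 'M[C]_n := conjmx (Hform X).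
Definition pcoord : 'rV[C]_n :=
  (uC P - conjmx (uC P)) *m invmx (vC P - conjmx (vC P)).
Definition Gt (X : pt) : 'rV[C]_n := dC uC P X - pcoord *m dC vC P X.
Definition GtD (X : pt) : 'rV[C]_n := Gt X *m Dmx.
Definition Gbar (X : pt) : 'cV[C]_n := (conjmx (Gt X))^T.

Definition minus_i_omega (X Y : pt) : C :=
  (k / 2)%:C * \tr (mwedge Hform Hbar X Y)
  + (2 * nu)%:C / 'i * \tr (mwedge GtD Gbar X Y).
Definition omegaXJ (X Y : pt) : C := 'i * minus_i_omega X Y.

Definition dx := dM px P.
Definition dy := dM py P.
Definition dp := dM pp P.
Definition dq := dM pq P.
Definition dyinv := dM (fun Q => invmx (py Q)) P.

Definition omega1 (X Y : pt) : R :=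
  k / 4 * \tr (mwedge (fun Z => invmx (py P) *m dx Z)
                       (fun Z => invmx (py P) *m dy Z) X Y).
Definition omega1' (X Y : pt) : R := - (k / 4) * \tr (mwedge dx dyinv X Y).
(* 2 nu dq^t ^ dp, read as the trace of the (n x n) matrix-valued 2-form *)
Definition omega2 (X Y : pt) : R :=
  2 * nu * \tr (mwedge (fun Z => (dq Z)^T) dp X Y).
Definition omega2_sum (X Y : pt) : R :=
  \sum_(i < n) swedge (dR (fun Q => 2 * nu * pq Q 0 i) P)
                      (dR (fun Q => pp Q 0 i) P) X Y.
Definition omega1_darboux (X Y : pt) : R :=
  \sum_(a < n) swedge (dR (fun Q => k / 4 * px Q a a) P)
                      (dR (fun Q => - (invmx (py Q)) a a) P) X Y
  + \sum_(a < n) \sum_(b < n | (a < b)%N)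
      swedge (dR (fun Q => k / 2 * px Q a b) P)
             (dR (fun Q => - (invmx (py Q)) a b) P) X Y.
End Omega.
End SiegelJacobi.

From Pilot Require Import Defs.
From HB Require Import structures.
From mathcomp Require Import all_boot all_order all_algebra.
From mathcomp Require Import complex.
From mathcomp Require Import all_classical all_reals all_analysis.
From mathcomp Require Import ring lra.
Set Implicit Arguments. Unset Strict Implicit. Unset Printing Implicit Defensive.
Import Order.TTheory GRing.Theory Num.Theory.
Local Open Scope ring_scope.
Local Open Scope complex_scope.

(* In the real chart v - conj v = 2i y, so D = (conj v - v)^-1 = (i/2) y^-1,
   the coordinate p is the real row pp, H = D dv and G^t = du - p dv = dp v + dq.
   Both terms of -i omega are traces of wedges of the form F ^ conj F or
   F S ^ (conj F)^T with S real symmetric; exchanging the two arguments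
   conjugates such a trace, so the wedge equals 2i Im tr(F(X) conj F(Y)), which
   is read off from the real and imaginary parts of F.  The identity
   d(y^-1) = - y^-1 dy y^-1, obtained by differentiating y y^-1 = 1, gives
   omega1', and the symmetry of dx and d(y^-1) folds tr(dx ^ d(y^-1)) into the
   diagonal and upper-triangular Darboux sums. *)

Section LineDerivatives.
Variable R : realType.

Lemma derive1_quadratic (a b c : R) :
  derive1 (fun t : R => a + t * b + t ^+ 2 * c) 0 = b.
Proof.
have -> : (fun t : R => a + t * b + t ^+ 2 * c)
    = horner (a%:P + 'X * b%:P + 'X ^+ 2 * c%:P).
  by apply/funext => t; rewrite !hornerE.
by rewrite derive1E derive_val !(derivD, derivM, derivC, derivX, derivXn) !hornerE /=; ring.
Qed.

Variable n : nat.
Implicit Types (P X : pt R n).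

Lemma dR_quadratic (a b c : R) (f : pt R n -> R) P X :
  (forall t, f (padd P (pscale t X)) = a + t * b + t ^+ 2 * c) -> dR f P X = b.
Proof. by move=> fE; rewrite /dR (funext fE) derive1_quadratic. Qed.

Lemma dM_quadratic p q (A B C : 'M[R]_(p, q)) (F : pt R n -> 'M[R]_(p, q)) P X :
  (forall t, F (padd P (pscale t X)) = A + t *: B + t ^+ 2 *: C) -> dM F P X = B.
Proof.
move=> FE; apply/matrixP => i j; rewrite mxE.
by apply: (dR_quadratic (a := A i j) (c := C i j)) => t; rewrite FE !mxE.
Qed.

Lemma dM_linear p q (F : pt R n -> 'M[R]_(p, q)) P X :
  (forall t, F (padd P (pscale t X)) = F P + t *: F X) -> dM F P X = F X.
Proof.
move=> FE; apply: (dM_quadratic (A := F P) (C := 0)) => t.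
by rewrite FE scaler0 addr0.
Qed.

Lemma dC_quadratic p q (A B C : 'M[R[i]]_(p, q)) (F : pt R n -> 'M[R[i]]_(p, q)) P X :
  (forall t, F (padd P (pscale t X)) = A + t%:C *: B + (t ^+ 2)%:C *: C) ->
  dC F P X = B.
Proof.
move=> FE; apply/matrixP => i j; rewrite mxE.
have entryE t : F (padd P (pscale t X)) i j = A i j + t%:C * B i j + (t ^+ 2)%:C * C i j.
  by rewrite FE !mxE.
rewrite (dR_quadratic (a := complex.Re (A i j)) (b := complex.Re (B i j))
                      (c := complex.Re (C i j))); last first.
  by move=> t; rewrite entryE; case: (A i j) (B i j) (C i j) => ? ? [? ?] [? ?] /=; ring.
rewrite (dR_quadratic (a := complex.Im (A i j)) (b := complex.Im (B i j))
                      (c := complex.Im (C i j))); last first.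
  by move=> t; rewrite entryE; case: (A i j) (B i j) (C i j) => ? ? [? ?] [? ?] /=; ring.
by rewrite -complexE.
Qed.

Lemma dR_linear (f : pt R n -> R) P X :
  (forall t, f (padd P (pscale t X)) = f P + t * f X) -> dR f P X = f X.
Proof.
move=> fE; apply: (dR_quadratic (a := f P) (c := 0)) => t.
by rewrite fE mulr0 addr0.
Qed.

End LineDerivatives.

Section InverseDerivative.
Variables (R : realType) (n : nat) (y Y : 'M[R]_n).
Hypothesis y_unit : y \in unitmx.

Let line_poly : 'M[{poly R}]_n := map_mx polyC y + 'X *: map_mx polyC Y.

Let horner_line_poly t : map_mx (horner_eval t) line_poly = y + t *: Y.
Proof. by apply/matrixP => i j; rewrite !mxE /horner_eval !hornerE mulrC. Qed.

Let det_line t : \det (y + t *: Y) = (\det line_poly).[t].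
Proof. by rewrite -horner_line_poly det_map_mx. Qed.

Let line_unit_near : \forall t \near 0, y + t *: Y \in unitmx.
Proof.
have det0 : (\det line_poly).[0] != 0 by rewrite -det_line scale0r addr0 -unitfE -unitmxE.
near=> t; rewrite unitmxE unitfE det_line; near: t.
exact: cvgr_neq0 _ (@continuous_horner R (\det line_poly) 0) det0.
Unshelve. all: by end_near.
Qed.

Lemma derivable_invmx_line i j :
  derivable (fun t : R => invmx (y + t *: Y) i j) 0 1.
Proof.
have rational : derivable
    (fun t => (\det line_poly).[t]^-1 * (\adj line_poly i j).[t]) 0 1.
  apply: derivableM; last exact: derivable_horner.
  apply: derivableV; last exact: derivable_horner.
  by rewrite -det_line scale0r addr0 -unitfE -unitmxE.
apply: near_eq_derivable rational; near=> t.
have t_unit : y + t *: Y \in unitmx by near: t; exact: line_unit_near.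
by rewrite /invmx t_unit -horner_line_poly -map_mx_adj det_map_mx !mxE.
Unshelve. all: by end_near.
Qed.

Lemma is_derive_invmx_line i j :
  is_derive (0 : R) 1 (fun t => invmx (y + t *: Y) i j)
            ((- (invmx y *m Y *m invmx y)) i j).
Proof.
pose D := \matrix_(i, j) derive1 (fun t : R => invmx (y + t *: Y) i j) 0.
have D_is_derive i' j' :
    is_derive (0 : R) 1 (fun t => invmx (y + t *: Y) i' j') (D i' j').
  by rewrite mxE derive1E; apply/derivableP/derivable_invmx_line.
suff D_val : D = - (invmx y *m Y *m invmx y).
  by rewrite -D_val.
(* differentiate (y + t Y) (y + t Y)^-1 = 1 at t = 0 *)
have product_rule : Y *m invmx y + y *m D = 0.
  apply/matrixP => i' j'; rewrite !mxE -big_split /=.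
  have line_is_derive l := is_deriveD (is_derive_cst (y i' l) (0 : R) (1 : R))
                                      (is_deriveZ (Y i' l) (is_derive_id (0 : R) 1)).
  have := is_derive_sum (fun l => is_deriveM (line_is_derive l) (D_is_derive l j')).
  move=> /(@near_eq_is_derive _ _ _ _ (cst (1%:M i' j' : R))) sum_is_derive.
  have near_one : \forall t \near 0,
      (\sum_(l < n) (cst (y i' l) + Y i' l \*: id)
                    * (fun t => invmx (y + t *: Y) l j')) t
      = cst (1%:M i' j' : R) t.
    near=> t.
    have t_unit : y + t *: Y \in unitmx by near: t; exact: line_unit_near.
    rewrite fct_sumE /= -(mulmxV t_unit) mxE.
    by apply: eq_bigr => l _; rewrite !mxE [t * _]mulrC.
  have := derive_val (is_derive := sum_is_derive near_one).
  rewrite derive_cst scale0r addr0 => /esym sum0.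
  rewrite -[RHS]sum0; apply: eq_bigr => l _ /=.
  by rewrite /GRing.scale_fun /GRing.scale /= !fctE; ring.
move/eqP: product_rule; rewrite addrC addr_eq0 => /eqP yD.
by rewrite -(mulKmx y_unit D) yD mulmxN mulmxA.
Unshelve. all: by end_near.
Qed.

End InverseDerivative.

Section ComplexMatrices.
Variable R : realType.
Local Notation C := R[i].

(* [Defs.conjmx] is qualified because MathComp has an unrelated [conjmx]. *)

Definition cpxmx m l (A B : 'M[R]_(m, l)) : 'M[C]_(m, l) := cmx A + 'i *: cmx B.

Lemma cmxD m l (A B : 'M[R]_(m, l)) : cmx (A + B) = cmx A + cmx B.
Proof. exact: map_mxD. Qed.

Lemma cmxB m l (A B : 'M[R]_(m, l)) : cmx (A - B) = cmx A - cmx B.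
Proof. exact: map_mxB. Qed.

Lemma cmxZ m l a (A : 'M[R]_(m, l)) : cmx (a *: A) = a%:C *: cmx A.
Proof. exact: map_mxZ. Qed.

Lemma cmx_mul m l p (A : 'M[R]_(m, l)) (B : 'M[R]_(l, p)) :
  cmx (A *m B) = cmx A *m cmx B.
Proof. exact: map_mxM. Qed.

Lemma trmx_cmx m l (A : 'M[R]_(m, l)) : (cmx A)^T = cmx A^T.
Proof. by rewrite map_trmx. Qed.

Lemma invmx_cmx m (A : 'M[R]_m) : invmx (cmx A) = cmx (invmx A).
Proof. exact/esym/map_invmx. Qed.

Lemma unitmx_cmx m (A : 'M[R]_m) : (cmx A \in unitmx) = (A \in unitmx).
Proof. exact: map_unitmx. Qed.

Lemma mxtrace_cmx m (A : 'M[R]_m) : \tr (cmx A) = (\tr A)%:C.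
Proof. by rewrite /mxtrace rmorph_sum; apply: eq_bigr => i _; rewrite mxE. Qed.

Lemma conjmx_cmx m l (A : 'M[R]_(m, l)) : Defs.conjmx (cmx A) = cmx A.
Proof. by apply/matrixP => i j; rewrite !mxE conjc_real. Qed.

Lemma conjmxD m l (A B : 'M[C]_(m, l)) :
  Defs.conjmx (A + B) = Defs.conjmx A + Defs.conjmx B.
Proof. exact: map_mxD. Qed.

Lemma conjmxZ m l a (A : 'M[C]_(m, l)) : Defs.conjmx (a *: A) = conjc a *: Defs.conjmx A.
Proof. by apply/matrixP => i j; rewrite !mxE rmorphM. Qed.

Lemma conjmx_mul m l p (A : 'M[C]_(m, l)) (B : 'M[C]_(l, p)) :
  Defs.conjmx (A *m B) = Defs.conjmx A *m Defs.conjmx B.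
Proof. exact: map_mxM. Qed.

Lemma conjmxK m l (A : 'M[C]_(m, l)) : Defs.conjmx (Defs.conjmx A) = A.
Proof. by apply/matrixP => i j; rewrite !mxE conjcK. Qed.

Lemma mxtrace_conjmx m (A : 'M[C]_m) : \tr (Defs.conjmx A) = conjc (\tr A).
Proof. by rewrite /mxtrace rmorph_sum; apply: eq_bigr => i _; rewrite mxE. Qed.

Lemma cpxmx_mul m l p (A B : 'M[R]_(m, l)) (A' B' : 'M[R]_(l, p)) :
  cpxmx A B *m cpxmx A' B' = cpxmx (A *m A' - B *m B') (A *m B' + B *m A').
Proof.
rewrite /cpxmx mulmxDl !mulmxDr -!scalemxAl -!scalemxAr -!cmx_mul scalerA.
by rewrite -expr2 sqr_i scaleN1r cmxB cmxD scalerDr [RHS]addrACA [- _ + _]addrC.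
Qed.

Lemma cmx_mul_cpxmx m l p (S : 'M[R]_(m, l)) (A B : 'M[R]_(l, p)) :
  cmx S *m cpxmx A B = cpxmx (S *m A) (S *m B).
Proof. by rewrite /cpxmx mulmxDr -scalemxAr -!cmx_mul. Qed.

Lemma cpxmx_mul_cmx m l p (A B : 'M[R]_(m, l)) (S : 'M[R]_(l, p)) :
  cpxmx A B *m cmx S = cpxmx (A *m S) (B *m S).
Proof. by rewrite /cpxmx mulmxDl -scalemxAl -!cmx_mul. Qed.

Lemma conjmx_cpxmx m l (A B : 'M[R]_(m, l)) : Defs.conjmx (cpxmx A B) = cpxmx A (- B).
Proof.
by apply/matrixP => i j; rewrite !mxE; apply/eqP; rewrite eq_complex /=; simpc.
Qed.

Lemma trmx_cpxmx m l (A B : 'M[R]_(m, l)) : (cpxmx A B)^T = cpxmx A^T B^T.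
Proof. by rewrite /cpxmx linearD linearZ /= !trmx_cmx. Qed.

Lemma Im_mxtrace_cpxmx m (A B : 'M[R]_m) : complex.Im (\tr (cpxmx A B)) = \tr B.
Proof. by rewrite /cpxmx linearD linearZ /= !mxtrace_cmx /= mul0r mul1r !add0r. Qed.

Lemma mxtrace_mul_trmx (K : comNzRingType) m l (A B : 'M[K]_(m, l)) :
  \tr (A *m B^T) = \tr (B *m A^T).
Proof. by rewrite -mxtrace_tr trmx_mul trmxK. Qed.

Lemma mxtrace_mul_conjmx m l (M : 'M[C]_(m, l)) (N : 'M[C]_(l, m)) :
  \tr (N *m Defs.conjmx M) = conjc (\tr (M *m Defs.conjmx N)).
Proof. by rewrite -mxtrace_conjmx conjmx_mul conjmxK mxtrace_mulC. Qed.

Lemma mxtrace_mul_sym_conjmx m l (M N : 'M[C]_(m, l)) (S : 'M[R]_l) : S^T = S ->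
  \tr (N *m cmx S *m (Defs.conjmx M)^T)
  = conjc (\tr (M *m cmx S *m (Defs.conjmx N)^T)).
Proof.
move=> S_sym; rewrite -mxtrace_conjmx !conjmx_mul conjmx_cmx -mxtrace_tr.
rewrite !trmx_mul trmxK trmx_cmx S_sym mulmxA.
by congr (\tr (_ *m _)); apply/matrixP => i j; rewrite !mxE conjcK.
Qed.

Lemma mulc_i_conj : 'i * conjc 'i = 1 :> C.
Proof. by apply/eqP; rewrite eq_complex /=; simpc. Qed.

Lemma subc_conj (z : C) : z - conjc z = 'i * (2 * complex.Im z)%:C.
Proof.
by case: z => a b; apply/eqP; rewrite eq_complex /=; simpc; rewrite mulr_natl mulr2n eqxx.
Qed.

End ComplexMatrices.

Section ComplexOneForms.
Variables (R : realType) (n : nat).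

Lemma mxtrace_mwedge_conjmx m (F : pt R n -> 'M[R[i]]_m) X Y :
  \tr (mwedge F (fun Z => Defs.conjmx (F Z)) X Y)
  = 'i * (2 * complex.Im (\tr (F X *m Defs.conjmx (F Y))))%:C.
Proof. by rewrite -subc_conj -(mxtrace_mul_conjmx (F X) (F Y)); exact: linearB. Qed.

Lemma mxtrace_mwedge_sym_conjmx m l (F : pt R n -> 'M[R[i]]_(m, l)) (S : 'M[R]_l)
    (c : R[i]) X Y : S^T = S ->
  \tr (mwedge (fun Z => F Z *m (c *: cmx S)) (fun Z => (Defs.conjmx (F Z))^T) X Y)
  = c * 'i * (2 * complex.Im (\tr (F X *m cmx S *m (Defs.conjmx (F Y))^T)))%:C.
Proof.
move=> S_sym; rewrite -mulrA -subc_conj.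
rewrite -(mxtrace_mul_sym_conjmx (F X) (F Y) S_sym) mulrBr.
by rewrite /mwedge linearB /= -!scalemxAr -!scalemxAl !mxtraceZ.
Qed.

End ComplexOneForms.

Lemma mulmx_affine_expand (K : comNzRingType) m l p (a : K)
    (A B : 'M[K]_(m, l)) (C D : 'M[K]_(l, p)) (E F : 'M[K]_(m, p)) :
  (A + a *: B) *m (C + a *: D) + (E + a *: F)
  = (A *m C + E) + a *: (B *m C + A *m D + F) + a ^+ 2 *: (B *m D).
Proof.
rewrite mulmxDl !mulmxDr -!scalemxAl -!scalemxAr !scalerDr !scalerA.
by apply/matrixP => i j; rewrite !mxE; ring.
Qed.

Section SiegelJacobiCoordinates.
Variables (R : realType) (n : nat).
Implicit Types (P X Y : pt R n).

Lemma posdef_mx_unit (y : 'M[R]_n) : posdef_mx y -> y \in unitmx.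
Proof.
case=> _ y_pos; rewrite unitmxE unitfE; apply/negP => /det0P [z z_neq0 zy0].
by have := y_pos z z_neq0; rewrite zy0 mul0mx mxE ltxx.
Qed.

Lemma sym_mx_entry m (M : 'M[R]_m) a b : M^T = M -> M b a = M a b.
Proof. by move=> M_sym; rewrite -[in LHS]M_sym mxE. Qed.

Lemma dx_eq P X : dx P X = px X. Proof. exact: dM_linear. Qed.
Lemma dy_eq P X : dy P X = py X. Proof. exact: dM_linear. Qed.
Lemma dp_eq P X : dp P X = pp X. Proof. exact: dM_linear. Qed.
Lemma dq_eq P X : dq P X = pq X. Proof. exact: dM_linear. Qed.

Lemma dR_px c a b P X : dR (fun Q => c * px Q a b) P X = c * px X a b.
Proof. by apply: dR_linear => t; rewrite /= !mxE; ring. Qed.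

Lemma dR_pq c i P X : dR (fun Q => c * pq Q 0 i) P X = c * pq X 0 i.
Proof. by apply: dR_linear => t; rewrite /= !mxE; ring. Qed.

Lemma dR_pp i P X : dR (fun Q => pp Q 0 i) P X = pp X 0 i.
Proof. by apply: dR_linear => t; rewrite /= !mxE. Qed.

Lemma dyinv_eq P X : py P \in unitmx ->
  dyinv P X = - (invmx (py P) *m py X *m invmx (py P)).
Proof.
move=> y_unit; apply/matrixP => i j; rewrite mxE /dR derive1E.
exact: (derive_val (is_derive := is_derive_invmx_line (py X) y_unit i j)).
Qed.

Lemma dR_oppinvmx a b P X : py P \in unitmx ->
  dR (fun Q => - invmx (py Q) a b) P X = - dyinv P X a b.
Proof.
move=> y_unit; rewrite dyinv_eq // /dR derive1E.
exact: (derive_val (is_derive := is_deriveN (is_derive_invmx_line (py X) y_unit a b))).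
Qed.

Lemma sym_dyinv P X : sym_mx (py P) -> sym_mx (py X) -> py P \in unitmx ->
  sym_mx (dyinv P X).
Proof.
move=> y_sym dy_sym y_unit; rewrite /sym_mx dyinv_eq // linearN /=.
by rewrite !trmx_mul trmx_inv y_sym dy_sym mulmxA.
Qed.

Lemma vC_cpxmx P : vC P = cpxmx (px P) (py P). Proof. by []. Qed.

Lemma vC_line P X t : vC (padd P (pscale t X)) = vC P + t%:C *: vC X.
Proof. rewrite /vC /= !cmxD !cmxZ !scalerDr !scalerA (mulrC t%:C); exact: addrACA. Qed.

Lemma dC_vC P X : dC (@vC R n) P X = vC X.
Proof.
by apply: (dC_quadratic (A := vC P) (C := 0)) => t; rewrite scaler0 addr0 vC_line.
Qed.

Lemma dC_uC P X :
  dC (@uC R n) P X = cmx (pp X) *m vC P + cmx (pp P) *m vC X + cmx (pq X).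
Proof.
apply: (dC_quadratic (A := uC P) (C := cmx (pp X) *m vC X)) => t.
rewrite /uC vC_line /= !cmxD !cmxZ rmorphXn.
exact: (mulmx_affine_expand t%:C (cmx (pp P)) (cmx (pp X)) (vC P) (vC X)
                             (cmx (pq P)) (cmx (pq X))).
Qed.

Lemma conjmx_vC_subr P : Defs.conjmx (vC P) - vC P = (- (2%:R * 'i)) *: cmx (py P).
Proof.
by rewrite conjmx_cpxmx; apply/matrixP => i j; rewrite !mxE rmorphN /=; ring.
Qed.

Lemma two_i_unit : (2%:R * 'i : R[i]) \is a GRing.unit.
Proof. by rewrite unitfE; simpc; apply/eqP => /(congr1 (@complex.Im R)) /=; lra. Qed.

Lemma inv_neg_2i : (- (2%:R * 'i))^-1 = 'i * (2^-1)%:C :> R[i].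
Proof.
apply: mulr1_eq.
have -> : - (2%:R * 'i) * ('i * (2^-1)%:C) = - ('i ^+ 2) * (2 * 2^-1 : R)%:C :> R[i].
  by rewrite rmorphM rmorph_nat; ring.
by rewrite sqr_i opprK mul1r divff ?pnatr_eq0.
Qed.

Section UnitPoint.
Variable P : pt R n.
Hypothesis y_unit : py P \in unitmx.

Lemma Dmx_eq : Dmx P = 'i *: cmx (2^-1 *: invmx (py P)).
Proof.
rewrite /Dmx conjmx_vC_subr invmxZ; last first.
  by rewrite unitmxZ ?unitrN ?two_i_unit ?unitmx_cmx.
by rewrite invmx_cmx inv_neg_2i cmxZ scalerA.
Qed.

Lemma pcoord_eq : pcoord P = cmx (pp P).
Proof.
have uC_sub : uC P - Defs.conjmx (uC P) = cmx (pp P) *m (vC P - Defs.conjmx (vC P)).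
  by rewrite /uC conjmxD conjmx_mul !conjmx_cmx mulmxBr opprD addrACA subrr addr0.
have vC_sub : vC P - Defs.conjmx (vC P) = (2%:R * 'i) *: cmx (py P).
  by rewrite -opprB conjmx_vC_subr scaleNr opprK.
by rewrite /pcoord uC_sub vC_sub mulmxK // unitmxZ ?two_i_unit ?unitmx_cmx.
Qed.

Lemma Gt_eq X : Gt P X = cpxmx (pp X *m px P + pq X) (pp X *m py P).
Proof.
rewrite /Gt dC_uC dC_vC pcoord_eq addrAC addrK vC_cpxmx cmx_mul_cpxmx.
by rewrite /cpxmx cmxD addrAC.
Qed.

Lemma Hform_eq X :
  Hform P X
  = 'i *: cpxmx ((2^-1 *: invmx (py P)) *m px X) ((2^-1 *: invmx (py P)) *m py X).
Proof.
by rewrite /Hform Dmx_eq dC_vC vC_cpxmx -[('i *: _) *m _]scalemxAl cmx_mul_cpxmx.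
Qed.

Lemma mxtrace_mwedge_Hform X Y :
  \tr (mwedge (Hform P) (Hbar P) X Y)
  = 'i * (- 2^-1 * \tr (mwedge (fun Z => invmx (py P) *m dx P Z)
                                (fun Z => invmx (py P) *m dy P Z) X Y))%:C.
Proof.
rewrite (mxtrace_mwedge_conjmx (Hform P)); congr ('i * _%:C).
rewrite !Hform_eq // conjmxZ -[('i *: _) *m _]scalemxAl -scalemxAr scalerA.
rewrite mulc_i_conj scale1r.
rewrite conjmx_cpxmx cpxmx_mul Im_mxtrace_cpxmx /mwedge !dx_eq !dy_eq.
rewrite mulmxN -!scalemxAl -!scalemxAr linearD linearN linearB /= !mxtraceZ.
rewrite (mxtrace_mulC (invmx (py P) *m py X)).
by field.
Qed.

Lemma mxtrace_mwedge_GtD (x_sym : sym_mx (px P)) (y_sym : sym_mx (py P)) X Y :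
  \tr (mwedge (GtD P) (Gbar P) X Y)
  = (\tr (mwedge (fun Z => (dq P Z)^T) (dp P) X Y))%:C.
Proof.
set S : 'M[R]_n := 2^-1 *: invmx (py P).
have S_sym : S^T = S by rewrite linearZ /= trmx_inv y_sym.
rewrite /GtD /Gbar Dmx_eq // -/S.
apply: etrans (mxtrace_mwedge_sym_conjmx (Gt P) 'i X Y S_sym) _.
rewrite -expr2 sqr_i mulN1r -rmorphN; congr (_%:C).
rewrite !Gt_eq // cpxmx_mul_cmx conjmx_cpxmx trmx_cpxmx cpxmx_mul Im_mxtrace_cpxmx.
have VS Z : pp Z *m py P *m S = 2^-1 *: pp Z.
  by rewrite /S -mulmxA -scalemxAr mulmxV // -scalemxAr mulmx1.
have SVt Z : S *m (pp Z *m py P)^T = 2^-1 *: (pp Z)^T.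
  by rewrite trmx_mul y_sym mulmxA /S -!scalemxAl mulVmx // mul1mx.
rewrite [(- _)^T]linearN /= mulmxN -[(_ + _) *m S *m _]mulmxA SVt VS.
rewrite -scalemxAr -scalemxAl linearD linearN /= !mxtraceZ.
rewrite /mwedge !dq_eq !dp_eq linearB /= !(mxtrace_mulC (_^T)).
rewrite (mxtrace_mul_trmx (pp Y)).
rewrite [(_ + pq Y)^T]linearD /= trmx_mul x_sym mulmxDl mulmxDr mulmxA !linearD /=.
by field.
Qed.
End UnitPoint.

End SiegelJacobiCoordinates.

Lemma sum_sym_diag_lt (V : nmodType) m (F : 'I_m -> 'I_m -> V) :
  (forall a b, F a b = F b a) ->
  \sum_(a < m) \sum_(b < m) F a b
  = \sum_(a < m) F a a + (\sum_(a < m) \sum_(b < m | (a < b)%N) F a b) *+ 2.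
Proof.
move=> F_sym.
have split_row (a : 'I_m) : \sum_(b < m) F a b
    = F a a + (\sum_(b < m | (a < b)%N) F a b + \sum_(b < m | (b < a)%N) F a b).
  rewrite (bigD1 a) //= (bigID (fun b : 'I_m => (a < b)%N)) /=.
  by congr (_ + (_ + _)); apply: eq_bigl => b; rewrite -(inj_eq val_inj) /=; case: ltngtP.
have lower_upper : \sum_(a < m) \sum_(b < m | (b < a)%N) F a b
    = \sum_(a < m) \sum_(b < m | (a < b)%N) F a b.
  rewrite (exchange_big_dep xpredT) //=.
  by apply: eq_bigr => b _; apply: eq_bigr => a _.
by rewrite (eq_bigr _ (fun a _ => split_row a)) !big_split /= lower_upper mulr2n.
Qed.

Section Forms.
Variables (R : realType) (n : nat).
Implicit Types (P X Y : pt R n).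

Lemma omegaXJ_scalar (k nu a b : R) :
  'i * ((k / 2)%:C * ('i * (- 2^-1 * a)%:C) + (2 * nu)%:C / 'i * b%:C)
  = (k / 4 * a + 2 * nu * b)%:C.
Proof.
have i_neq0 : 'i != 0 :> R[i] by apply/eqP => /(congr1 (@complex.Im R)) /=; lra.
have -> : 'i * ((k / 2)%:C * ('i * (- 2^-1 * a)%:C) + (2 * nu)%:C / 'i * b%:C)
    = 'i ^+ 2 * (k / 2 * (- 2^-1 * a))%:C + 'i / 'i * (2 * nu * b)%:C.
  by rewrite !rmorphM; ring.
by rewrite sqr_i divff // mulN1r mul1r -rmorphN -rmorphD; congr (_%:C); field.
Qed.

Lemma omegaXJ_eq_omega1_omega2 k nu P X Y : in_domain P ->
  omegaXJ k nu P X Y = (omega1 k P X Y + omega2 nu P X Y)%:C.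
Proof.
case=> x_sym y_pos; have y_unit := posdef_mx_unit y_pos; case: y_pos => y_sym _.
rewrite /omegaXJ /minus_i_omega mxtrace_mwedge_Hform // mxtrace_mwedge_GtD //.
exact: omegaXJ_scalar.
Qed.

Lemma omega1_eq_omega1' k P X Y : py P \in unitmx -> omega1 k P X Y = omega1' k P X Y.
Proof.
move=> y_unit; rewrite /omega1 /omega1' /mwedge !dyinv_eq // !dy_eq.
rewrite !mulmxN !mulmxA !linearB !linearN /=.
rewrite (mxtrace_mulC (dx P X *m invmx (py P) *m py Y)).
rewrite (mxtrace_mulC (dx P Y *m invmx (py P) *m py X)) !mulmxA.
ring.
Qed.

Lemma omega2_eq_sum nu P X Y : omega2 nu P X Y = omega2_sum nu P X Y.
Proof.
rewrite /omega2_sum /swedge; under eq_bigr do rewrite !dR_pq !dR_pp.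
rewrite /omega2 /mwedge !dq_eq !dp_eq linearB /= /mxtrace mulrBr !mulr_sumr -sumrB.
by apply: eq_bigr => i _; rewrite !mxE !big_ord1 !mxE; ring.
Qed.

Lemma omega1'_eq_darboux k P X Y : in_domain P -> tangent X -> tangent Y ->
  omega1' k P X Y = omega1_darboux k P X Y.
Proof.
case=> _ y_pos [dxX_sym dyX_sym] [dxY_sym dyY_sym].
have y_unit := posdef_mx_unit y_pos; case: y_pos => y_sym _.
have dyinvX_sym := sym_dyinv y_sym dyX_sym y_unit.
have dyinvY_sym := sym_dyinv y_sym dyY_sym y_unit.
pose F a b := dx P X a b * dyinv P Y b a - dx P Y a b * dyinv P X b a.
have F_sym a b : F a b = F b a.
  by rewrite /F !dx_eq (sym_mx_entry _ _ dxX_sym) (sym_mx_entry _ _ dxY_sym)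
     (sym_mx_entry _ _ dyinvX_sym) (sym_mx_entry _ _ dyinvY_sym).
have -> : omega1' k P X Y = - (k / 4) * \sum_(a < n) \sum_(b < n) F a b.
  rewrite /omega1' /mwedge linearB /mxtrace -sumrB; congr (_ * _).
  by apply: eq_bigr => a _; rewrite !mxE -sumrB.
rewrite (sum_sym_diag_lt F_sym) /omega1_darboux /swedge mulrDr mulr_sumr.
congr (_ + _).
  by apply: eq_bigr => a _; rewrite !dR_px !dR_oppinvmx // /F !dx_eq; ring.
have -> : forall s : R, - (k / 4) * (s *+ 2) = - (k / 2) * s.
  by move=> s; rewrite -mulr_natr; field.
rewrite mulr_sumr; apply: eq_bigr => a _; rewrite mulr_sumr; apply: eq_bigr => b _.
rewrite !dR_px !dR_oppinvmx // /F !dx_eq.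
by rewrite (sym_mx_entry a b dyinvX_sym) (sym_mx_entry a b dyinvY_sym); ring.
Qed.

End Forms.

Theorem lemma2 (R : realType) (n : nat) (k nu : R) :
  (0 < n)%N -> 0 < k -> 0 < nu ->
  forall P : pt R n, in_domain P ->
  forall X Y : pt R n, tangent X -> tangent Y ->
    [/\ omegaXJ k nu P X Y = (omega1 k P X Y + omega2 nu P X Y)%:C,
        omega1 k P X Y = omega1' k P X Y,
        omega2 nu P X Y = omega2_sum nu P X Y,
        omega1 k P X Y = omega1_darboux k P X Y
      & omegaXJ k nu P X Y
        = (omega1_darboux k P X Y + omega2_sum nu P X Y)%:C].
Proof.
move=> _ _ _ P P_dom X Y X_tan Y_tan.
have y_unit := posdef_mx_unit P_dom.2.
have omega1_darboux : omega1 k P X Y = omega1_darboux k P X Y.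
  by rewrite omega1_eq_omega1' // omega1'_eq_darboux.
split.
- exact: omegaXJ_eq_omega1_omega2.
- exact: omega1_eq_omega1'.
- exact: omega2_eq_sum.
- exact: omega1_darboux.
- by rewrite omegaXJ_eq_omega1_omega2 // omega1_darboux omega2_eq_sum.
Qed.
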